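(* Let $\mathsf{s} > \mathsf{r} \ge 1$ be integers. Let $\mathbf{Z}$ be a random $\mathsf{s}\times\mathsf{r}$ matrix over $\mathbb{F}_2$, uniformly distributed over the set of all $\mathsf{s}\times\mathsf{r}$ binary matrices of (column) rank $\mathsf{r}$, and let $\mathbf{U}$ be a random $\mathsf{r}\times\mathsf{s}$ matrix over $\mathbb{F}_2$, independent of $\mathbf{Z}$ and uniformly distributed over the set of all $\mathsf{r}\times\mathsf{s}$ binary matrices of (row) rank $\mathsf{r}$. Let $\mathbf{M}=\mathbf{Z}\mathbf{U}$ (the mask). Fix a set $I$ of $\mathsf{r}$ row indices and a set $J$ of $\mathsf{r}$ column indices of $\mathbf{M}$, and let $\mathbf{M}_{I,J}$ denote the $\mathsf{r}\times\mathsf{r}$ submatrix of $\mathbf{M}$ at the intersections of these rows and columns. Then, conditioned on $\mathbf{M}_{I,J}$ being invertible (i.e., its rows and its columns each spanning $\mathbb{F}_2^{\mathsf{r}}$), $\mathbf{M}_{I,J}$ is uniformly distributed over the set of all invertible $\mathsf{r}\times\mathsf{r}$ binary matrices.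
   Context: All arithmetic is over the binary field $\mathbb{F}_2$. The matrix $\mathbf{M}=\mathbf{Z}\mathbf{U}$ is called a masking matrix. *)

From HB Require Import structures.
From mathcomp Require Import all_boot all_order all_algebra.
Set Implicit Arguments. Unset Strict Implicit. Unset Printing Implicit Defensive.
Import GRing.Theory.
Local Open Scope ring_scope.

Notation F2 := 'F_2.

(* The k-th smallest element of a set I of indices with #|I| = r
   (indices of I listed in increasing order). *)
Definition idx_of (n r : nat) (I : {set 'I_n}) (hI : #|I| = r) (k : 'I_r) : 'I_n :=
  enum_val (cast_ord (esym hI) k).

Definition submx_IJ (m n r : nat) (I : {set 'I_m}) (J : {set 'I_n})
    (hI : #|I| = r) (hJ : #|J| = r) (M : 'M[F2]_(m, n)) : 'M[F2]_r :=
  \matrix_(i < r, j < r) M (idx_of hI i) (idx_of hJ j).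

Definition fullcol (s r : nat) : {set 'M[F2]_(s, r)} := [set Z | \rank Z == r].
Definition fullrow (r s : nat) : {set 'M[F2]_(r, s)} := [set U | \rank U == r].

(* (Z, U) is uniform on fullcol x fullrow (independent uniform Z and U),
   so probabilities of events are counting ratios on this product set. *)
Definition prob_ZU (s r : nat) (E : pred ('M[F2]_(s, r) * 'M[F2]_(r, s))) : rat :=
  (#|[set p in setX (fullcol s r) (fullrow r s) | E p]|%:R /
   #|setX (fullcol s r) (fullrow r s)|%:R)%R.

Definition cprob_ZU (s r : nat) (E C : pred ('M[F2]_(s, r) * 'M[F2]_(r, s))) : rat :=
  (prob_ZU (fun p => E p && C p) / prob_ZU C)%R.

From HB Require Import structures.
From mathcomp Require Import all_boot all_order all_algebra.
From mathcomp Require Import ring.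
Set Implicit Arguments. Unset Strict Implicit. Unset Printing Implicit Defensive.
Import GRing.Theory Num.Theory.
Local Open Scope ring_scope.

(* For G invertible, U |-> U * embed_mx G (G on the coordinates J, identity
   elsewhere) preserves the rank of U and turns M_{I,J} = (ZU)_{I,J} into
   M_{I,J} G.  Hence, among full-rank pairs (Z, U), the fibres of
   (Z, U) |-> M_{I,J} above all invertible matrices have the same size, so
   conditioned on invertibility M_{I,J} is uniform. *)

Lemma idx_of_inj n r (I : {set 'I_n}) (hI : #|I| = r) : injective (idx_of hI).
Proof. by move=> a b /enum_val_inj /cast_ord_inj. Qed.

Section Selection.
Variable R : pzRingType.
Variables (n r : nat) (J : {set 'I_n}) (hJ : #|J| = r).

Definition rowsel : 'M[R]_(r, n) := rowsub (idx_of hJ) 1%:M.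
Definition colsel : 'M[R]_(n, r) := colsub (idx_of hJ) 1%:M.

Lemma rowsel_colsel : rowsel *m colsel = 1%:M.
Proof.
rewrite /rowsel /colsel mul_rowsub_mx mul1mx; apply/matrixP => i j.
by rewrite !mxE (inj_eq (@idx_of_inj _ _ _ hJ)).
Qed.

Definition embed_mx (G : 'M[R]_r) : 'M[R]_n := 1%:M + colsel *m (G - 1%:M) *m rowsel.

Lemma embed_mx_colsel G : embed_mx G *m colsel = colsel *m G.
Proof.
by rewrite mulmxDl mul1mx -!mulmxA rowsel_colsel mulmx1 mulmxBr mulmx1 addrC subrK.
Qed.

Lemma embed_mx1 : embed_mx 1%:M = 1%:M.
Proof. by rewrite /embed_mx subrr mulmx0 mul0mx addr0. Qed.

Lemma embed_mxM G H : embed_mx G *m embed_mx H = embed_mx (G *m H).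
Proof.
rewrite /embed_mx -[G in RHS](subrK 1%:M) -[H in RHS](subrK 1%:M).
move: (G - 1%:M) (H - 1%:M) => A B.
have -> : (A + 1%:M) *m (B + 1%:M) - 1%:M = B + A + A *m B.
  by rewrite mulmxDl !mulmxDr !mul1mx mulmx1 !addrA addrK addrC [A *m B + A]addrC addrA.
have sandwich : colsel *m A *m rowsel *m (colsel *m B *m rowsel)
                = colsel *m (A *m B) *m rowsel.
  by rewrite -!mulmxA (mulmxA rowsel) rowsel_colsel mul1mx.
by rewrite mulmxDl !mulmxDr sandwich !mul1mx mulmx1 !(mulmxDl, mulmxDr) !addrA.
Qed.

End Selection.

Section SelectionRank.
Variables (F : fieldType) (n r : nat) (J : {set 'I_n}) (hJ : #|J| = r).

Lemma mxrank_colsel : \rank (colsel F hJ) = r.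
Proof.
apply/eqP; rewrite eqn_leq rank_leq_col -{1}(mxrank1 F r) -(rowsel_colsel F hJ).
exact: mxrankM_maxr.
Qed.

Lemma mxrank_rowsel : \rank (rowsel F hJ) = r.
Proof.
apply/eqP; rewrite eqn_leq rank_leq_row -{1}(mxrank1 F r) -(rowsel_colsel F hJ).
exact: mxrankM_maxl.
Qed.

End SelectionRank.

Lemma card_unitmx_gt0 (F : finFieldType) n : (0 < #|[set B : 'M[F]_n | B \in unitmx]|)%N.
Proof. by rewrite card_gt0; apply/set0Pn; exists 1%:M; rewrite inE unitmx1. Qed.

Section Fibres.
Variable F : finFieldType.
Variables (s r : nat) (I J : {set 'I_s}) (hI : #|I| = r) (hJ : #|J| = r).

Definition fullrank_pairs : {set 'M[F]_(s, r) * 'M[F]_(r, s)} :=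
  setX [set Z | \rank Z == r] [set U | \rank U == r].

Definition selmx (M : 'M[F]_s) : 'M[F]_r := rowsel F hI *m M *m colsel F hJ.

Definition fibre (B : 'M[F]_r) := [set p in fullrank_pairs | selmx (p.1 *m p.2) == B].

Lemma embed_mx_unit (G : 'M[F]_r) : G \in unitmx -> embed_mx hJ G \in unitmx.
Proof.
move=> uG; have inv : embed_mx hJ G *m embed_mx hJ (invmx G) = 1%:M.
  by rewrite embed_mxM mulmxV ?embed_mx1.
by case/mulmx1_unit: inv.
Qed.

Lemma card_fibre_mulmx_le B G : G \in unitmx -> (#|fibre B| <= #|fibre (B *m G)|)%N.
Proof.
move=> uG; set P := embed_mx hJ G.
have uP : P \in unitmx by exact: embed_mx_unit.
have act_inj : injective (fun p : 'M[F]_(s, r) * 'M[F]_(r, s) => (p.1, p.2 *m P)).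
  move=> [Z U] [Z' U'] [/= -> eU]; congr (_, _).
  exact: can_inj (mulmxK uP) _ _ eU.
rewrite -(card_imset _ act_inj); apply/subset_leq_card/subsetP => q.
case/imsetP=> [[Z U]]; rewrite !inE /= => /andP [/andP [rkZ rkU] /eqP <-] ->.
rewrite /= rkZ mxrankMfree ?row_free_unit // rkU /selmx -!mulmxA.
by rewrite /P embed_mx_colsel !mulmxA eqxx.
Qed.

Lemma card_fibre_mulmx B G : G \in unitmx -> #|fibre (B *m G)| = #|fibre B|.
Proof.
move=> uG; apply/eqP; rewrite eqn_leq card_fibre_mulmx_le // andbT.
by rewrite -{2}(mulmxK uG B) card_fibre_mulmx_le ?unitmx_inv.
Qed.

Lemma card_fibre_unit B : B \in unitmx -> #|fibre B| = #|fibre 1%:M|.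
Proof. by move=> uB; rewrite -(mul1mx B) card_fibre_mulmx. Qed.

Lemma card_fibre1_gt0 : (0 < #|fibre 1%:M|)%N.
Proof.
rewrite card_gt0; apply/set0Pn; exists (colsel F hI, rowsel F hJ).
rewrite !inE /= /selmx !mulmxA rowsel_colsel mul1mx rowsel_colsel eqxx andbT.
by rewrite mxrank_colsel mxrank_rowsel !eqxx.
Qed.

Lemma card_selmx_unit :
  #|[set p in fullrank_pairs | selmx (p.1 *m p.2) \in unitmx]|
  = (#|[set B : 'M[F]_r | B \in unitmx]| * #|fibre 1%:M|)%N.
Proof.
rewrite -sum1_card (partition_big (fun p => selmx (p.1 *m p.2)) (fun B => B \in unitmx)); last first.
  by move=> p; rewrite inE => /andP [].
rewrite -sum_nat_const; apply: eq_big => [B|B uB]; first by rewrite inE.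
rewrite -(card_fibre_unit uB) -sum1_card; apply: eq_bigl => p; rewrite !inE.
by case: (selmx (p.1 *m p.2) =P B) => [->|]; rewrite ?uB ?andbT ?andbF.
Qed.

End Fibres.

Lemma submx_IJE s r (I J : {set 'I_s}) (hI : #|I| = r) (hJ : #|J| = r) (M : 'M[F2]_s) :
  submx_IJ hI hJ M = selmx hI hJ M.
Proof.
rewrite /selmx /rowsel /colsel mul_rowsub_mx mul1mx mulmx_colsub mulmx1.
by apply/matrixP => i j; rewrite !mxE.
Qed.

Theorem theorem2 (s r : nat) (hr : (1 <= r)%N) (hrs : (r < s)%N)
    (I J : {set 'I_s}) (hI : #|I| = r) (hJ : #|J| = r)
    (A : 'M[F2]_r) (hA : A \in unitmx) :
  cprob_ZU (s := s) (r := r)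
    (fun p => submx_IJ hI hJ (p.1 *m p.2) == A)
    (fun p => submx_IJ hI hJ (p.1 *m p.2) \in unitmx)
  = (1 / #|[set B : 'M[F2]_r | B \in unitmx]|%:R)%R.
Proof.
have event_fibre : [set p in fullrank_pairs F2 s r |
    (submx_IJ hI hJ (p.1 *m p.2) == A) && (submx_IJ hI hJ (p.1 *m p.2) \in unitmx)]
    = fibre hI hJ A.
  apply/setP => p; rewrite !inE submx_IJE.
  by case: (selmx hI hJ (p.1 *m p.2) =P A) => [->|]; rewrite ?hA ?andbT ?andbF.
have event_unit : [set p in fullrank_pairs F2 s r | submx_IJ hI hJ (p.1 *m p.2) \in unitmx]
    = [set p in fullrank_pairs F2 s r | selmx hI hJ (p.1 *m p.2) \in unitmx].
  by apply/setP => p; rewrite !inE submx_IJE.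
rewrite /cprob_ZU /prob_ZU -/(fullrank_pairs F2 s r) event_fibre event_unit.
rewrite card_selmx_unit (card_fibre_unit hI hJ hA) natrM.
have fibre_pos := card_fibre1_gt0 F2 hI hJ.
have pairs_pos : (0 < #|fullrank_pairs F2 s r|)%N.
  by apply: leq_trans fibre_pos _; apply/subset_leq_card/subsetP => p; rewrite inE => /andP [].
by field; rewrite !pnatr_eq0 -!lt0n fibre_pos pairs_pos card_unitmx_gt0.
Qed.
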